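(* For every $m>0$ there exist $C(m)\ge0$ and $\tau_0\ge0$ such that for all $\tau\ge\tau_0$, $$\big|\tau^{-2}e^{\tau m/2}F_1(m,\tau)-1\big|\le C(m)\,\tau\, e^{-\tau m/2}.$$ In particular $\tau^{-2}e^{\tau m/2}F_1(m,\tau)\to1$ as $\tau\to+\infty$.
   Context: $F_1(m,\tau)=\lambda_1\big((-m/2,m/2),\tau e_r\big)$, the principal Dirichlet eigenvalue on the interval $(-m/2,m/2)$ of the operator $u\mapsto -u''+\tau\,\mathrm{sgn}(x)\,u'$ (here $e_r(x)=x/|x|=\mathrm{sgn}(x)$). *)

From Stdlib Require Import Reals.
From Coquelicot Require Import Coquelicot.
Open Scope R_scope.

Definition sgn (x : R) : R :=
  if Rlt_dec 0 x then 1 else if Rlt_dec x 0 then -1 else 0.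

(* lam is the principal Dirichlet eigenvalue on (-m/2, m/2) of
   u |-> -u'' + tau * sgn(x) * u' : there is a positive eigenfunction u
   (strong solution: C^1 on the open interval, twice differentiable off the
   discontinuity point 0 of the drift), vanishing at both endpoints. *)
Definition principal_eigenvalue (m tau lam : R) : Prop :=
  exists u u' : R -> R,
    (forall x, -(m/2) < x < m/2 -> is_derive u x (u' x) /\ continuous u' x) /\
    (forall x, -(m/2) < x < m/2 -> x <> 0 ->
        exists d2, is_derive u' x d2 /\ - d2 + tau * sgn x * u' x = lam * u x) /\
    (forall x, -(m/2) < x < m/2 -> 0 < u x) /\
    filterlim u (at_right (-(m/2))) (locally 0) /\
    filterlim u (at_left (m/2)) (locally 0).

(* On each half of the interval the substitution v = exp (-+ tau x / 2) u removes the drift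
   and leaves v'' = (tau^2/4 - lam) v; the equation is invariant under x |-> -x, so both
   halves are treated alike.  If lam >= tau^2/4 then v is concave, and comparing v with its
   tangent at 0 on both sides contradicts tau m > 4.  Hence lam = tau^2/4 - s^2 with s > 0,
   the Dirichlet condition forces u = c exp (tau x / 2) sinh (s (m/2 - x)) on each half, and
   matching u'(0) from both sides gives tau sinh (s m/2) = 2 s cosh (s m/2); conversely the
   even extension of this profile is an eigenfunction for every root.  Writing a = s m/2 and
   b = tau m/4, the equation reads b - a = (b + a) exp (-2a), so a is exponentially close to b
   and tau^-2 exp (tau m/2) lam = exp (2 (b - a)) / (1 + exp (-2a))^2 = 1 + O (b exp (-2b)). *)

From Stdlib Require Import Reals Lra Psatz.
From Coquelicot Require Import Coquelicot.
Open Scope R_scope.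

Lemma is_derive_continuous (f : R -> R) x l : is_derive f x l -> continuous f x.
Proof. intros H. apply (ex_derive_continuous f x). exists l. exact H. Qed.

Lemma is_derive_reflect (f : R -> R) x l :
  is_derive f (- x) l -> is_derive (fun t => f (- t)) x (- l).
Proof.
  intros H. replace (- l) with (scal (-1) l) by (unfold scal; simpl; unfold mult; simpl; ring).
  apply (is_derive_comp f Ropp x l (-1) H). auto_derive; [exact I | ring].
Qed.

Lemma is_derive_Rmult (f g : R -> R) x df dg : is_derive f x df -> is_derive g x dg ->
  is_derive (fun t => f t * g t) x (df * g x + f x * dg).
Proof. intros Hf Hg. exact (is_derive_mult f g x df dg Hf Hg Rmult_comm). Qed.

Lemma is_derive_exp_lin c x : is_derive (fun t => exp (c * t)) x (c * exp (c * x)).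
Proof. auto_derive; [exact I | ring]. Qed.

Lemma continuous_exp_lin c x : continuous (fun t => exp (c * t)) x.
Proof. exact (is_derive_continuous _ x _ (is_derive_exp_lin c x)). Qed.

Lemma derive_nonpos_nonincreasing (f df : R -> R) a b : a <= b ->
  (forall x, a < x < b -> is_derive f x (df x) /\ df x <= 0) ->
  (forall x, a <= x <= b -> continuous f x) -> f b <= f a.
Proof.
  intros Hab Hd Hc. destruct (Req_dec a b) as [<- | Hne]; [lra |].
  assert (pr : forall c, a < c < b -> derivable_pt f c).
  { intros c Hc'. exists (df c). apply is_derive_Reals, Hd, Hc'. }
  destruct (MVT f id a b pr (fun c _ => derivable_pt_id c)) as (c & Hc' & Heq).
  - lra.
  - intros c Hc'. apply continuity_pt_filterlim, Hc, Hc'.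
  - intros c _. apply derivable_continuous_pt, derivable_pt_id.
  - rewrite derive_pt_id in Heq.
    rewrite (derive_pt_eq_0 f c (df c)) in Heq by apply is_derive_Reals, Hd, Hc'.
    destruct (Hd c Hc') as [_ Hneg]. unfold id in Heq. nra.
Qed.

Lemma derive_zero_constant (f : R -> R) a b : a <= b ->
  (forall x, a < x < b -> is_derive f x 0) ->
  (forall x, a <= x <= b -> continuous f x) -> f b = f a.
Proof.
  intros Hab Hd Hc. apply Rle_antisym.
  - apply (derive_nonpos_nonincreasing f (fun _ => 0)); auto.
    intros x Hx. split; [apply Hd, Hx | lra].
  - assert (- f b <= - f a); [| lra].
    apply (derive_nonpos_nonincreasing (fun t => - f t) (fun _ => 0)); auto.
    + intros x Hx. split; [| lra]. replace 0 with (opp 0) by (unfold opp; simpl; ring).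
      exact (is_derive_opp f x 0 (Hd x Hx)).
    + intros x Hx. apply (continuous_opp f), Hc, Hx.
Qed.

Lemma is_derive_glue0 (f g h : R -> R) l :
  (forall x, 0 <= x -> f x = g x) -> (forall x, x <= 0 -> f x = h x) ->
  is_derive g 0 l -> is_derive h 0 l -> is_derive f 0 l.
Proof.
  intros Hg Hh Dg Dh. apply is_derive_Reals. apply is_derive_Reals in Dg, Dh.
  intros eps Heps. destruct (Dg eps Heps) as [d1 H1]. destruct (Dh eps Heps) as [d2 H2].
  assert (Hd : 0 < Rmin d1 d2) by (apply Rmin_glb_lt; apply cond_pos).
  exists (mkposreal _ Hd). intros x Hx0 Hx. simpl in Hx.
  pose proof (Rmin_l d1 d2). pose proof (Rmin_r d1 d2).
  destruct (Rle_dec 0 x).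
  - rewrite (Hg (0 + x)), (Hg 0) by lra. apply H1; auto; lra.
  - rewrite (Hh (0 + x)), (Hh 0) by lra. apply H2; auto; lra.
Qed.

Lemma continuous_glue0 (f g h : R -> R) :
  (forall x, 0 <= x -> f x = g x) -> (forall x, x <= 0 -> f x = h x) ->
  continuous g 0 -> continuous h 0 -> continuous f 0.
Proof.
  intros Hg Hh Cg Ch P HP.
  assert (HPg : locally (g 0) P) by (rewrite <- Hg by lra; exact HP).
  assert (HPh : locally (h 0) P) by (rewrite <- Hh by lra; exact HP).
  change (locally 0 (fun x => P (f x))).
  apply (filter_imp (fun x => P (g x) /\ P (h x))).
  2: exact (filter_and (fun x => P (g x)) (fun x => P (h x)) (Cg P HPg) (Ch P HPh)).
  intros x [Pg Ph]. destruct (Rle_dec 0 x); [rewrite Hg | rewrite Hh]; auto; lra.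
Qed.

Lemma filterlim_within_continuous (f : R -> R) x (D : R -> Prop) :
  continuous f x -> filterlim f (within D (locally x)) (locally (f x)).
Proof. intros H. eapply filterlim_filter_le_1; [apply filter_le_within | exact H]. Qed.

Lemma filterlim_at_left_unique (g Phi : R -> R) a b l : a < b ->
  (forall x, a < x < b -> g x = Phi x) -> filterlim g (at_left b) (locally l) ->
  continuous Phi b -> Phi b = l.
Proof.
  intros Hab Heq Hg HPhi.
  apply (filterlim_locally_unique (F := at_left b) Phi).
  - exact (filterlim_within_continuous Phi b _ HPhi).
  - apply (filterlim_ext_loc g); auto.
    unfold at_left, within. apply (filter_imp (fun x => a < x)); [| exact (open_gt a b Hab)].
    intros x Hax Hxb. apply Heq. lra.
Qed.

Lemma exp_opp_mul x : exp x * exp (- x) = 1.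
Proof. rewrite <- exp_plus, Rplus_opp_r. apply exp_0. Qed.

Lemma exp_le_mono x y : x <= y -> exp x <= exp y.
Proof. intros [H | ->]; [left; apply exp_increasing; exact H | lra]. Qed.

Lemma exp_ge_1_plus x : 1 + x <= exp x.
Proof.
  destruct (Req_dec x 0) as [-> | Hx]; [rewrite exp_0; lra |].
  left. apply exp_ineq1. exact Hx.
Qed.

Lemma exp_le_1_plus_3 y : 0 <= y <= 1 -> exp y <= 1 + 3 * y.
Proof.
  intros Hy. pose proof (exp_ge_1_plus (- y)). pose proof (exp_opp_mul y). pose proof (exp_pos y).
  assert (exp y <= 3) by (apply Rle_trans with (exp 1); [apply exp_le_mono | apply exp_le_3]; lra).
  nra.
Qed.

Lemma cosh_gt_0 x : 0 < cosh x.
Proof. unfold cosh. pose proof (exp_pos x). pose proof (exp_pos (- x)). lra. Qed.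

Lemma sgn_pos x : 0 < x -> sgn x = 1.
Proof. intros H. unfold sgn. destruct (Rlt_dec 0 x); [reflexivity | lra]. Qed.

Lemma sgn_neg x : x < 0 -> sgn x = -1.
Proof. intros H. unfold sgn. destruct (Rlt_dec 0 x); [lra |]. destruct (Rlt_dec x 0); [reflexivity | lra]. Qed.

Lemma sgn_0 : sgn 0 = 0.
Proof. unfold sgn. destruct (Rlt_dec 0 0); [lra |]. destruct (Rlt_dec 0 0); [lra | reflexivity]. Qed.

Record half_solution (L tau lam : R) (u u' : R -> R) : Prop := {
  half_derive : forall x, 0 <= x < L -> is_derive u x (u' x);
  half_derive_continuous0 : continuous u' 0;
  half_ode : forall x, 0 < x < L ->
    exists d2, is_derive u' x d2 /\ - d2 + tau * u' x = lam * u x;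
  half_pos : forall x, 0 <= x < L -> 0 < u x;
  half_boundary : filterlim u (at_left L) (locally 0) }.
Arguments half_derive {L tau lam u u'}.
Arguments half_derive_continuous0 {L tau lam u u'}.
Arguments half_ode {L tau lam u u'}.
Arguments half_pos {L tau lam u u'}.
Arguments half_boundary {L tau lam u u'}.

Section HalfInterval.

Variables (L tau lam : R) (u u' : R -> R).
Hypotheses (HL : 0 < L) (sol : half_solution L tau lam u u').

(* [w = v'] and [w' = k v]: the substitution removes the drift. *)
Let k := tau ^ 2 / 4 - lam.
Let v x := exp (- (tau / 2) * x) * u x.
Let w x := exp (- (tau / 2) * x) * (u' x - tau / 2 * u x).

Lemma half_derive_continuous x : 0 <= x < L -> continuous u' x.
Proof.
  intros Hx. destruct (Req_dec x 0) as [-> | Hx0]; [exact (half_derive_continuous0 sol) |].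
  destruct (half_ode sol x ltac:(lra)) as [d2 [Hd2 _]]. exact (is_derive_continuous _ _ _ Hd2).
Qed.

Lemma half_is_derive_v x : 0 <= x < L -> is_derive v x (w x).
Proof.
  intros Hx.
  assert (E : w x = - (tau / 2) * exp (- (tau / 2) * x) * u x + exp (- (tau / 2) * x) * u' x)
    by (unfold w; ring).
  rewrite E.
  apply (is_derive_Rmult (fun t => exp (- (tau / 2) * t)) u);
    [apply is_derive_exp_lin | exact (half_derive sol x Hx)].
Qed.

Lemma half_is_derive_w x : 0 < x < L -> is_derive w x (k * v x).
Proof.
  intros Hx. destruct (half_ode sol x Hx) as [d2 [Hd2 Hode]].
  assert (E : k * v x = - (tau / 2) * exp (- (tau / 2) * x) * (u' x - tau / 2 * u x)
                        + exp (- (tau / 2) * x) * (d2 - tau / 2 * u' x))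
    by (unfold k, v; replace d2 with (tau * u' x - lam * u x) by lra; field).
  rewrite E.
  apply (is_derive_Rmult (fun t => exp (- (tau / 2) * t)) (fun t => u' t - tau / 2 * u t));
    [apply is_derive_exp_lin |].
  apply (is_derive_minus u' (fun t => tau / 2 * u t)); [exact Hd2 |].
  exact (is_derive_scal u x (tau / 2) (u' x) (half_derive sol x ltac:(lra))).
Qed.

Lemma half_continuous_v x : 0 <= x < L -> continuous v x.
Proof. intros Hx. exact (is_derive_continuous _ _ _ (half_is_derive_v x Hx)). Qed.

Lemma half_continuous_w x : 0 <= x < L -> continuous w x.
Proof.
  intros Hx. apply (continuous_mult (fun t => exp (- (tau / 2) * t))); [apply continuous_exp_lin |].
  apply (continuous_minus u' (fun t => tau / 2 * u t)); [exact (half_derive_continuous x Hx) |].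
  apply (continuous_scal_r (tau / 2) u).
  exact (is_derive_continuous _ _ _ (half_derive sol x Hx)).
Qed.

Lemma half_concave_bound : k <= 0 -> 0 <= u 0 + (u' 0 - tau / 2 * u 0) * L.
Proof.
  intros Hk.
  replace (u 0 + (u' 0 - tau / 2 * u 0) * L) with (v 0 + w 0 * L)
    by (unfold v, w; rewrite Rmult_0_r, exp_0; ring).
  assert (w_le : forall y, 0 <= y < L -> w y <= w 0).
  { intros y Hy. apply (derive_nonpos_nonincreasing w (fun x => k * v x)); [lra | |].
    - intros x Hx. split; [apply half_is_derive_w; lra |].
      assert (0 < v x) by (unfold v; pose proof (exp_pos (- (tau / 2) * x));
                           pose proof (half_pos sol x ltac:(lra)); nra).
      nra.
    - intros x Hx. apply half_continuous_w. lra. }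
  (* concavity: [v] lies below its tangent at [0] *)
  assert (v_le : forall y, 0 <= y < L -> v y <= v 0 + w 0 * y).
  { intros y Hy. enough (v y - w 0 * y <= v 0 - w 0 * 0) by lra.
    apply (derive_nonpos_nonincreasing (fun t => v t - w 0 * t) (fun t => w t - w 0)); [lra | |].
    - intros x Hx. split; [| pose proof (w_le x ltac:(lra)); lra].
      apply (is_derive_minus v (fun t => w 0 * t)); [apply half_is_derive_v; lra |].
      auto_derive; [exact I | ring].
    - intros x Hx. apply (continuous_minus v (fun t => w 0 * t)); [apply half_continuous_v; lra |].
      apply (is_derive_continuous _ x (w 0)). auto_derive; [exact I | ring]. }
  assert (v_pos : forall y, 0 <= y < L -> 0 < v y)
    by (intros y Hy; unfold v; pose proof (exp_pos (- (tau / 2) * y));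
        pose proof (half_pos sol y Hy); nra).
  assert (Hv0 : 0 < v 0) by (apply v_pos; lra).
  destruct (Rle_or_lt 0 (w 0)) as [Hw0 | Hw0]; [nra |].
  destruct (Rle_or_lt L (v 0 / - w 0)) as [Hle | Hlt].
  - apply (Rmult_le_compat_l (- w 0)) in Hle; [| lra].
    replace (- w 0 * (v 0 / - w 0)) with (v 0) in Hle by (field; lra). nra.
  - (* otherwise the tangent, hence [v], would vanish inside the interval *)
    assert (Hy : 0 <= v 0 / - w 0 < L) by (split; [apply Rlt_le, Rdiv_lt_0_compat |]; lra).
    pose proof (v_le _ Hy). pose proof (v_pos _ Hy).
    replace (w 0 * (v 0 / - w 0)) with (- v 0) in * by (field; lra). lra.
Qed.

Lemma half_exp_invariant r : r ^ 2 = k -> forall x, 0 <= x < L ->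
  (w x + r * v x) * exp (- r * x) = u' 0 - tau / 2 * u 0 + r * u 0.
Proof.
  intros Hr x Hx.
  replace (u' 0 - tau / 2 * u 0 + r * u 0) with ((w 0 + r * v 0) * exp (- r * 0))
    by (unfold v, w; rewrite !Rmult_0_r, exp_0; ring).
  apply (derive_zero_constant (fun t => (w t + r * v t) * exp (- r * t)) 0 x); [lra | |].
  - intros y Hy.
    assert (E : 0 = (k * v y + r * w y) * exp (- r * y) + (w y + r * v y) * (- r * exp (- r * y)))
      by (rewrite <- Hr; ring).
    rewrite E.
    apply (is_derive_Rmult (fun t => w t + r * v t) (fun t => exp (- r * t)));
      [| apply is_derive_exp_lin].
    apply (is_derive_plus w (fun t => r * v t)); [apply half_is_derive_w; lra |].
    apply (is_derive_scal v y r). apply half_is_derive_v. lra.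
  - intros y Hy. apply (continuous_mult (fun t => w t + r * v t)); [| apply continuous_exp_lin].
    apply (continuous_plus w (fun t => r * v t)); [apply half_continuous_w; lra |].
    apply (continuous_scal_r r v). apply half_continuous_v. lra.
Qed.

Lemma half_exponential_form s : 0 < s -> s ^ 2 = k -> forall x, 0 <= x < L ->
  u x = exp (tau / 2 * x) * ((u' 0 - tau / 2 * u 0 + s * u 0) * exp (s * x)
                             - (u' 0 - tau / 2 * u 0 - s * u 0) * exp (- s * x)) / (2 * s).
Proof.
  intros Hs Hk x Hx.
  pose proof (half_exp_invariant s Hk x Hx) as Hp.
  pose proof (half_exp_invariant (- s) ltac:(rewrite <- Hk; ring) x Hx) as Hq.
  replace (- - s * x) with (s * x) in Hq by ring.
  replace (u' 0 - tau / 2 * u 0 + - s * u 0) with (u' 0 - tau / 2 * u 0 - s * u 0) in Hq by ring.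
  rewrite <- Hp, <- Hq. unfold v.
  assert (E : exp (s * x) * exp (- s * x) = 1)
    by (rewrite <- exp_plus; replace (s * x + - s * x) with 0 by ring; apply exp_0).
  assert (G : exp (tau / 2 * x) * exp (- (tau / 2) * x) = 1)
    by (rewrite <- exp_plus; replace (tau / 2 * x + - (tau / 2) * x) with 0 by ring; apply exp_0).
  transitivity (u x * ((exp (tau / 2 * x) * exp (- (tau / 2) * x)) * (exp (s * x) * exp (- s * x))));
    [rewrite E, G; ring | field; lra].
Qed.

Lemma half_shooting_relation s : 0 < s -> s ^ 2 = k ->
  (u' 0 - tau / 2 * u 0) * sinh (s * L) + s * u 0 * cosh (s * L) = 0.
Proof.
  intros Hs Hk.
  set (P := u' 0 - tau / 2 * u 0 + s * u 0). set (Q := u' 0 - tau / 2 * u 0 - s * u 0).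
  set (Phi := fun x => exp (tau / 2 * x) * (P * exp (s * x) - Q * exp (- s * x)) / (2 * s)).
  assert (HPhi : Phi L = 0).
  { apply (filterlim_at_left_unique u Phi 0 L 0 HL).
    - intros x Hx. apply half_exponential_form; auto. lra.
    - exact (half_boundary sol).
    - apply (ex_derive_continuous Phi L). unfold Phi. auto_derive. lra. }
  unfold Phi in HPhi.
  destruct (Rmult_integral _ _ HPhi) as [H1 | H1];
    [| pose proof (Rinv_neq_0_compat (2 * s)); lra].
  destruct (Rmult_integral _ _ H1) as [H2 | H2]; [pose proof (exp_pos (tau / 2 * L)); lra |].
  unfold sinh, cosh, P, Q in *. replace (- (s * L)) with (- s * L) by ring. nra.
Qed.

End HalfInterval.

Lemma principal_eigenvalue_half_solutions m tau lam : 0 < m -> principal_eigenvalue m tau lam ->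
  exists u u', half_solution (m / 2) tau lam u u' /\
               half_solution (m / 2) tau lam (fun x => u (- x)) (fun x => - u' (- x)).
Proof.
  intros Hm (u & u' & Hd & Hode & Hpos & Hleft & Hright).
  exists u, u'. split; split.
  - intros x Hx. apply Hd. lra.
  - apply Hd. lra.
  - intros x Hx. destruct (Hode x ltac:(lra) ltac:(lra)) as [d2 [Hd2 Heq]].
    rewrite sgn_pos in Heq by lra. exists d2. split; [exact Hd2 | lra].
  - intros x Hx. apply Hpos. lra.
  - exact Hright.
  - intros x Hx. apply is_derive_reflect. apply Hd. lra.
  - apply (@continuous_opp _ R_AbsRing R_NormedModule (fun x => u' (- x))).
    apply (continuous_comp Ropp u'); [apply (ex_derive_continuous Ropp); auto_derive; exact I |].
    rewrite Ropp_0. apply Hd. lra.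
  - intros x Hx. destruct (Hode (- x) ltac:(lra) ltac:(lra)) as [d2 [Hd2 Heq]].
    rewrite sgn_neg in Heq by lra. exists d2. split; [| lra].
    replace d2 with (opp (- d2)) by (unfold opp; simpl; ring).
    apply (is_derive_opp (fun t => u' (- t))). apply is_derive_reflect. exact Hd2.
  - intros x Hx. apply Hpos. lra.
  - exact (filterlim_comp _ _ _ Ropp u _ _ _ (filterlim_Ropp_left (m / 2)) Hleft).
Qed.

Lemma principal_eigenvalue_shooting m tau lam : 0 < m -> 4 < tau * m ->
  principal_eigenvalue m tau lam ->
  exists s, 0 < s /\ lam = tau ^ 2 / 4 - s ^ 2 /\
            tau * sinh (s * (m / 2)) = 2 * s * cosh (s * (m / 2)).
Proof.
  intros Hm Htm Hlam.
  destruct (principal_eigenvalue_half_solutions m tau lam Hm Hlam) as (u & u' & Hright & Hleft).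
  assert (HL : 0 < m / 2) by lra.
  assert (Hu0 : 0 < u 0) by (apply (half_pos Hright); lra).
  destruct (Rle_or_lt (tau ^ 2 / 4 - lam) 0) as [Hk | Hk].
  - exfalso.
    pose proof (half_concave_bound _ _ _ _ _ HL Hright Hk).
    pose proof (half_concave_bound _ _ _ _ _ HL Hleft Hk). cbv beta in *. rewrite Ropp_0 in *.
    nra.
  - set (s := sqrt (tau ^ 2 / 4 - lam)).
    assert (Hs : 0 < s) by (apply sqrt_lt_R0; exact Hk).
    assert (Hs2 : s ^ 2 = tau ^ 2 / 4 - lam) by (unfold s; rewrite <- Rsqr_pow2; apply Rsqr_sqrt; lra).
    exists s. split; [exact Hs | split; [lra |]].
    pose proof (half_shooting_relation _ _ _ _ _ HL Hright s Hs Hs2).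
    pose proof (half_shooting_relation _ _ _ _ _ HL Hleft s Hs Hs2). cbv beta in *. rewrite Ropp_0 in *.
    (* adding the two relations eliminates [u' 0] *)
    apply (Rmult_eq_reg_l (u 0)); [nra | lra].
Qed.

Section EvenExtension.

Variables (G G' G'' : R -> R).
Hypotheses (dG : forall y, is_derive G y (G' y)) (dG' : forall y, is_derive G' y (G'' y))
           (G'0 : G' 0 = 0).

Lemma is_derive_even_extension x : is_derive (fun t => G (Rabs t)) x (sgn x * G' (Rabs x)).
Proof.
  destruct (Rtotal_order x 0) as [Hx | [-> | Hx]].
  - rewrite sgn_neg, Rabs_left by exact Hx.
    replace (-1 * G' (- x)) with (- G' (- x)) by ring.
    apply (is_derive_ext_loc (fun t => G (- t))); [| apply is_derive_reflect, dG].
    apply (filter_imp (fun t => t < 0)); [| exact (open_lt 0 x Hx)].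
    intros t Ht. rewrite Rabs_left by exact Ht. reflexivity.
  - rewrite sgn_0, Rmult_0_l.
    apply (is_derive_glue0 _ G (fun t => G (- t))).
    + intros t Ht. rewrite Rabs_pos_eq by exact Ht. reflexivity.
    + intros t Ht. rewrite Rabs_left1 by exact Ht. reflexivity.
    + rewrite <- G'0 at 2. apply dG.
    + pose proof (is_derive_reflect G 0 (G' 0)) as H.
      rewrite Ropp_0, G'0, Ropp_0 in H. apply H. rewrite <- G'0 at 2. apply dG.
  - rewrite sgn_pos, Rabs_pos_eq, Rmult_1_l by lra.
    apply (is_derive_ext_loc G); [| apply dG].
    apply (filter_imp (fun t => 0 < t)); [| exact (open_gt 0 x Hx)].
    intros t Ht. rewrite Rabs_pos_eq by lra. reflexivity.
Qed.

Lemma is_derive_odd_extension x : x <> 0 ->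
  is_derive (fun t => sgn t * G' (Rabs t)) x (G'' (Rabs x)).
Proof.
  intros Hx0. destruct (Rtotal_order x 0) as [Hx | [Hx | Hx]]; [| lra |].
  - rewrite Rabs_left by exact Hx.
    apply (is_derive_ext_loc (fun t => - G' (- t))).
    + apply (filter_imp (fun t => t < 0)); [| exact (open_lt 0 x Hx)].
      intros t Ht. rewrite sgn_neg, Rabs_left by exact Ht. lra.
    + replace (G'' (- x)) with (opp (- G'' (- x))) by (unfold opp; simpl; ring).
      apply (is_derive_opp (fun t => G' (- t))). apply is_derive_reflect, dG'.
  - rewrite Rabs_pos_eq by lra.
    apply (is_derive_ext_loc G'); [| apply dG'].
    apply (filter_imp (fun t => 0 < t)); [| exact (open_gt 0 x Hx)].
    intros t Ht. rewrite sgn_pos, Rabs_pos_eq by lra. lra.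
Qed.

Lemma continuous_odd_extension x : continuous (fun t => sgn t * G' (Rabs t)) x.
Proof.
  destruct (Req_dec x 0) as [-> | Hx0].
  - apply (continuous_glue0 _ G' (fun t => - G' (- t))).
    + intros t Ht. destruct (Req_dec t 0) as [-> | Ht0]; [rewrite sgn_0, G'0; ring |].
      rewrite sgn_pos, Rabs_pos_eq by lra. ring.
    + intros t Ht. destruct (Req_dec t 0) as [-> | Ht0];
        [rewrite sgn_0, Ropp_0, G'0; ring |].
      rewrite sgn_neg, Rabs_left by lra. ring.
    + exact (is_derive_continuous _ _ _ (dG' 0)).
    + apply (@continuous_opp _ R_AbsRing R_NormedModule (fun t => G' (- t))).
      exact (is_derive_continuous _ _ _ (is_derive_reflect _ _ _ (dG' (- 0)))).
  - exact (is_derive_continuous _ _ _ (is_derive_odd_extension x Hx0)).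
Qed.

End EvenExtension.

Definition sinh_profile (tau s L y : R) : R := exp (tau / 2 * y) * sinh (s * (L - y)).

Definition sinh_profile' (tau s L y : R) : R :=
  exp (tau / 2 * y) * (tau / 2 * sinh (s * (L - y)) - s * cosh (s * (L - y))).

Lemma is_derive_sinh_profile tau s L y :
  is_derive (sinh_profile tau s L) y (sinh_profile' tau s L y).
Proof. unfold sinh_profile, sinh_profile', sinh, cosh. auto_derive; [exact I |]. unfold Rminus. field. Qed.

Lemma is_derive_sinh_profile' tau s L y :
  is_derive (sinh_profile' tau s L) y
    (tau * sinh_profile' tau s L y - (tau ^ 2 / 4 - s ^ 2) * sinh_profile tau s L y).
Proof. unfold sinh_profile, sinh_profile', sinh, cosh. auto_derive; [exact I |]. unfold Rminus. field. Qed.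

Lemma sinh_profile_pos tau s L y : 0 < s -> y < L -> 0 < sinh_profile tau s L y.
Proof.
  intros Hs Hy. unfold sinh_profile. apply Rmult_lt_0_compat; [apply exp_pos |].
  rewrite <- sinh_0. apply sinh_lt. nra.
Qed.

Lemma sinh_profile_L tau s L : sinh_profile tau s L L = 0.
Proof. unfold sinh_profile. rewrite Rminus_diag, Rmult_0_r, sinh_0. ring. Qed.

Lemma principal_eigenvalue_of_shooting m tau s : 0 < m -> 0 < s ->
  tau * sinh (s * (m / 2)) = 2 * s * cosh (s * (m / 2)) ->
  principal_eigenvalue m tau (tau ^ 2 / 4 - s ^ 2).
Proof.
  intros Hm Hs Hrel.
  set (G := sinh_profile tau s (m / 2)). set (G' := sinh_profile' tau s (m / 2)).
  assert (G'0 : G' 0 = 0).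
  { unfold G', sinh_profile'. rewrite Rmult_0_r, exp_0, Rminus_0_r. lra. }
  pose proof (is_derive_sinh_profile tau s (m / 2)) as dG.
  pose proof (is_derive_sinh_profile' tau s (m / 2)) as dG'.
  set (G'' := fun y => tau * G' y - (tau ^ 2 / 4 - s ^ 2) * G y).
  assert (Hbnd : forall x (D : R -> Prop), Rabs x = m / 2 ->
            filterlim (fun t => G (Rabs t)) (within D (locally x)) (locally 0)).
  { intros x D Hx.
    assert (HG : G (Rabs x) = 0) by (rewrite Hx; apply sinh_profile_L). rewrite <- HG.
    apply (filterlim_within_continuous (fun t => G (Rabs t))).
    apply (continuous_comp Rabs G); [apply continuous_Rabs | exact (is_derive_continuous _ _ _ (dG _))]. }
  exists (fun x => G (Rabs x)), (fun x => sgn x * G' (Rabs x)).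
  split; [| split; [| split; [| split]]].
  - intros x _. split; [exact (is_derive_even_extension G G' dG G'0 x) |].
    exact (continuous_odd_extension G' G'' dG' G'0 x).
  - intros x _ Hx0. exists (G'' (Rabs x)).
    split; [exact (is_derive_odd_extension G' G'' dG' x Hx0) |].
    assert (Hsgn : sgn x * sgn x = 1).
    { destruct (Rlt_or_le x 0); [rewrite sgn_neg | rewrite sgn_pos]; lra. }
    replace (tau * sgn x * (sgn x * G' (Rabs x))) with (tau * (sgn x * sgn x) * G' (Rabs x))
      by ring.
    rewrite Hsgn. unfold G''. ring.
  - intros x Hx. apply sinh_profile_pos; [exact Hs |]. apply Rabs_def1; lra.
  - apply Hbnd. rewrite Rabs_left; lra.
  - apply Hbnd. rewrite Rabs_pos_eq; lra.
Qed.

Lemma shooting_root_exists L tau : 0 < L -> 2 < tau * L ->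
  exists s, 0 < s /\ tau * sinh (s * L) = 2 * s * cosh (s * L).
Proof.
  intros HL Htau. set (b := tau * L / 2). assert (Hb : 1 < b) by (unfold b; lra).
  set (f := fun a => b * sinh a - a * cosh a).
  set (a1 := (b - 1) / 2).
  assert (Hfb : f b < 0).
  { unfold f, sinh, cosh. pose proof (Rmult_lt_0_compat b (exp (- b)) ltac:(lra) (exp_pos (- b))).
    lra. }
  (* at [a1], [exp (2 a1) >= 1 + 2 a1 = b] already makes [f] positive *)
  assert (Hfa1 : 0 < f a1).
  { unfold f, sinh, cosh. pose proof (exp_opp_mul a1). pose proof (exp_pos a1).
    assert (1 + 2 * a1 <= exp a1 * exp a1)
      by (rewrite <- exp_plus; replace (a1 + a1) with (2 * a1) by ring; apply exp_ge_1_plus).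
    assert (0 < (b - a1) * (exp a1 * exp a1) - (b + a1)) by (unfold a1 in *; nra).
    nra. }
  assert (Hf : continuity f).
  { intros x. apply continuity_pt_filterlim, (ex_derive_continuous f).
    unfold f, sinh, cosh. auto_derive. exact I. }
  destruct (IVT_gen f a1 b 0 Hf) as [a [Ha Hfa]].
  { rewrite Rmin_right, Rmax_left by lra. lra. }
  rewrite Rmin_left, Rmax_right in Ha by (unfold a1; lra).
  exists (a / L). split; [apply Rdiv_lt_0_compat; unfold a1 in Ha; lra |].
  replace (a / L * L) with a by (field; lra).
  unfold f, b in Hfa. apply (Rmult_eq_reg_l (L / 2)); [| lra].
  replace (L / 2 * (2 * (a / L) * cosh a)) with (a * cosh a) by (field; lra). lra.
Qed.

Lemma shooting_eigenvalue_cosh tau s x : tau * sinh x = 2 * s * cosh x ->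
  tau ^ 2 / 4 - s ^ 2 = tau ^ 2 / (4 * cosh x ^ 2).
Proof.
  intros Hrel.
  pose proof (cosh_gt_0 x) as Hc.
  assert (Hcs : cosh x ^ 2 - sinh x ^ 2 = 1) by (unfold cosh, sinh; pose proof (exp_opp_mul x); nra).
  apply (Rmult_eq_reg_r (4 * cosh x ^ 2)); [| nra].
  replace (tau ^ 2 / (4 * cosh x ^ 2) * (4 * cosh x ^ 2)) with (tau ^ 2) by (field; lra).
  replace ((tau ^ 2 / 4 - s ^ 2) * (4 * cosh x ^ 2)) with (tau ^ 2 * cosh x ^ 2 - (2 * s * cosh x) ^ 2)
    by field.
  rewrite <- Hrel. transitivity (tau ^ 2 * (cosh x ^ 2 - sinh x ^ 2)); [ring | rewrite Hcs; ring].
Qed.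

Lemma shooting_root_near a b : 0 < a -> b * sinh a = a * cosh a ->
  b - 1 <= a < b /\ b - a = (b + a) * exp (- (2 * a)).
Proof.
  intros Ha Hrel. unfold sinh, cosh in Hrel.
  pose proof (exp_opp_mul a) as HEF. pose proof (exp_pos a). pose proof (exp_pos (- a)).
  assert (Ht : exp (- (2 * a)) = exp (- a) * exp (- a))
    by (rewrite <- exp_plus; f_equal; ring).
  assert (HE2 : 1 + 2 * a <= exp a * exp a)
    by (rewrite <- exp_plus; replace (a + a) with (2 * a) by ring; apply exp_ge_1_plus).
  assert (HFE : exp (- a) < exp a) by (apply exp_increasing; lra).
  assert (Hdiff : b - a = (b + a) * exp (- (2 * a))).
  { assert (Hm : b * (exp a * exp (- a)) - b * (exp (- a) * exp (- a))
                 = a * (exp a * exp (- a)) + a * (exp (- a) * exp (- a)))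
      by (transitivity (2 * (b * ((exp a - exp (- a)) / 2)) * exp (- a));
          [field | rewrite Hrel; field]).
    rewrite HEF in Hm. rewrite Ht. lra. }
  split; [| exact Hdiff].
  assert (Hb : 0 < b) by nra.
  split; nra.
Qed.

Lemma shooting_asymptotics a b : 0 < a -> 36 <= b -> b * sinh a = a * cosh a ->
  Rabs (exp (2 * b) / (4 * cosh a ^ 2) - 1) <= (108 * b + 18) * exp (- (2 * b)).
Proof.
  intros Ha Hb Hrel.
  destruct (shooting_root_near a b Ha Hrel) as [[Hab1 Hab] Hdiff].
  set (t := exp (- (2 * a))) in *. set (Z := exp (- (2 * b))).
  set (y := 2 * (b - a)).
  assert (Htp : 0 < t) by apply exp_pos. assert (HZp : 0 < Z) by apply exp_pos.
  assert (HQ : exp (2 * b) / (4 * cosh a ^ 2) = exp y / (1 + t) ^ 2).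
  { assert (Hc : 4 * cosh a ^ 2 = exp (2 * a) * (1 + t) ^ 2).
    { unfold cosh, t.
      replace (exp (2 * a)) with (exp a * exp a) by (rewrite <- exp_plus; f_equal; ring).
      replace (exp (- (2 * a))) with (exp (- a) * exp (- a)) by (rewrite <- exp_plus; f_equal; ring).
      replace (exp a * exp a * (1 + exp (- a) * exp (- a)) ^ 2)
        with ((exp a + exp a * exp (- a) * exp (- a)) ^ 2) by ring.
      rewrite exp_opp_mul. field. }
    assert (He : exp (2 * b) = exp y * exp (2 * a)) by (rewrite <- exp_plus; unfold y; f_equal; ring).
    rewrite Hc, He. pose proof (exp_pos (2 * a)). field. lra. }
  assert (Ht9 : t <= 9 * Z).
  { assert (Hexp2 : exp 2 <= 9).
    { replace 2 with (1 + 1) by ring. rewrite exp_plus. pose proof exp_le_3. pose proof (exp_pos 1). nra. }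
    apply Rle_trans with (exp 2 * Z); [| unfold Z; pose proof (exp_pos (- (2 * b))); nra].
    unfold t, Z. rewrite <- exp_plus. apply exp_le_mono. lra. }
  assert (HbZ : 36 * b * Z <= 1).
  { assert (H2b : exp (2 * b) * Z = 1) by (unfold Z; apply exp_opp_mul).
    assert ((1 + b) ^ 2 <= exp (2 * b)).
    { replace (exp (2 * b)) with (exp b * exp b) by (rewrite <- exp_plus; f_equal; ring).
      pose proof (exp_ge_1_plus b). nra. }
    nra. }
  assert (Hy : 0 <= y <= 4 * b * t) by (unfold y; nra).
  assert (Hy1 : y <= 1) by nra.
  rewrite HQ. apply Rabs_le. split.
  - assert (1 - 2 * t <= exp y / (1 + t) ^ 2).
    { pose proof (exp_ge_1_plus y). apply (Rmult_le_reg_r ((1 + t) ^ 2)); [nra |].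
      field_simplify; nra. }
    nra.
  - assert (exp y / (1 + t) ^ 2 <= exp y).
    { pose proof (exp_pos y). apply (Rmult_le_reg_r ((1 + t) ^ 2)); [nra |].
      field_simplify; nra. }
    pose proof (exp_le_1_plus_3 y ltac:(lra)). nra.
Qed.

Lemma principal_eigenvalue_asymptotics m tau lam : 0 < m -> 36 <= tau * m / 4 ->
  principal_eigenvalue m tau lam ->
  Rabs (/ tau ^ 2 * exp (tau * m / 2) * lam - 1) <= (27 * tau * m + 18) * exp (- (tau * m / 2)).
Proof.
  intros Hm Hb Hlam.
  destruct (principal_eigenvalue_shooting m tau lam Hm ltac:(lra) Hlam) as (s & Hs & -> & Hrel).
  assert (Htau : 0 < tau) by nra.
  rewrite (shooting_eigenvalue_cosh tau s _ Hrel).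
  pose proof (cosh_gt_0 (s * (m / 2))).
  replace (/ tau ^ 2 * exp (tau * m / 2) * (tau ^ 2 / (4 * cosh (s * (m / 2)) ^ 2)))
    with (exp (2 * (tau * m / 4)) / (4 * cosh (s * (m / 2)) ^ 2))
    by (replace (2 * (tau * m / 4)) with (tau * m / 2) by field; field; nra).
  replace (27 * tau * m + 18) with (108 * (tau * m / 4) + 18) by field.
  replace (- (tau * m / 2)) with (- (2 * (tau * m / 4))) by field.
  apply shooting_asymptotics; [nra | exact Hb |].
  replace (tau * m / 4 * sinh (s * (m / 2))) with (m / 4 * (tau * sinh (s * (m / 2)))) by field.
  rewrite Hrel. field.
Qed.

Theorem mainTheorem11 :
  forall m : R, 0 < m ->
  exists C tau0 : R, 0 <= C /\ 0 <= tau0 /\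
    forall tau : R, tau0 <= tau -> 0 < tau ->
      (exists lam, principal_eigenvalue m tau lam) /\
      (forall lam, principal_eigenvalue m tau lam ->
         Rabs (/ (tau ^ 2) * exp (tau * m / 2) * lam - 1)
           <= C * tau * exp (- (tau * m / 2))).
Proof.
  intros m Hm. exists (27 * m + 18), (144 / m + 1).
  assert (H144 : 144 / m * m = 144) by (field; lra).
  assert (0 < 144 / m) by (apply Rdiv_lt_0_compat; lra).
  split; [lra | split; [lra |]].
  intros tau Htau Htau0.
  assert (Hb : 36 <= tau * m / 4) by nra.
  split.
  - destruct (shooting_root_exists (m / 2) tau) as (s & Hs & Hrel); [lra | nra |].
    exists (tau ^ 2 / 4 - s ^ 2). exact (principal_eigenvalue_of_shooting m tau s Hm Hs Hrel).
  - intros lam Hlam.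
    eapply Rle_trans; [exact (principal_eigenvalue_asymptotics m tau lam Hm Hb Hlam) |].
    pose proof (exp_pos (- (tau * m / 2))). nra.
Qed.
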